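(* Consider the general load coupling model with JT described in the context. Let $\bm\kappa,\bm\kappa'\in\{0,1\}^{n\times m}$ be JT patterns such that, for some cell $i$ and UE $j$, $\kappa_{ij}=0$, $\kappa'_{ij}=1$, and $\kappa'_{hl}=\kappa_{hl}$ for all $(h,l)\neq(i,j)$. Let $\widetilde{\bm{x}}\in\mathbb{R}^n_{\ge0}$ satisfy $\widetilde{\bm{x}}=\bm{f}^{\bm\kappa}\big(\bm{h}^{\bm\kappa}(\widetilde{\bm{x}})\big)$ and $\bm{x}\in\mathbb{R}^n_{\ge0}$ satisfy $\bm{x}=\bm{f}^{\bm{\kappa'}}\big(\bm{h}^{\bm{\kappa'}}(\bm{x})\big)$. Define the sequence $\bm{x}^{(0)}=\widetilde{\bm{x}}$ and $\bm{x}^{(t)}=\bm{f}^{\bm\kappa}\big(\bm{h}^{\bm{\kappa'}}(\bm{x}^{(t-1)})\big)$ for $t\ge1$. If there exists $k\geq 1$ such that $f^{\bm{\kappa'}}_i\big(\bm{h}^{\bm{\kappa'}}(\bm{x}^{(k)})\big)\leq x^{(k)}_i$, then $\bm{x}\leq\widetilde{\bm{x}}$ componentwise.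
   Context: There are $n$ cells and $m$ UEs. Cell $i$ has transmit power per resource block $p_i>0$, $g_{ij}>0$ is the channel gain between cell $i$ and UE $j$, $d_j>0$ is the (normalized) bitrate demand of UE $j$, and $\sigma^2>0$ is the noise power. A JT pattern is a matrix $\bm\kappa\in\{0,1\}^{n\times m}$, where $\kappa_{ij}=1$ means cell $i$ serves UE $j$; every UE is assumed to be served by at least one cell. For a pattern $\bm\kappa$, the cell load function $\bm f^{\bm\kappa}=(f^{\bm\kappa}_1,\dots,f^{\bm\kappa}_n)$ and SINR function $\bm h^{\bm\kappa}=(h^{\bm\kappa}_1,\dots,h^{\bm\kappa}_m)$ are $f_i^{\bm{\kappa}}(\bm{\gamma})=\sum_{j=1}^{m}\frac{\kappa_{ij}d_j}{\log_2\left(1+\gamma_j\right)}$, $\quad h_j^{\bm{\kappa}}(\bm{x})=\frac{\sum_{i=1}^{n}p_ig_{ij}\kappa_{ij}}{\sum_{k=1}^{n}p_kg_{kj}x_{k}(1-\kappa_{kj})+\sigma^2}$, for $\bm\gamma\in\mathbb{R}^m_{>0}$ and $\bm x\in\mathbb{R}^n_{\ge0}$. A fixed point $\bm x=\bm f^{\bm\kappa}(\bm h^{\bm\kappa}(\bm x))$ is the network-wide cell load vector for pattern $\bm\kappa$. Vector inequalities are componentwise. *)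

From mathcomp Require Import all_boot all_order all_algebra.
From mathcomp Require Import Rstruct.
From Stdlib Require Import Reals.
Set Implicit Arguments. Unset Strict Implicit. Unset Printing Implicit Defensive.
Import Order.TTheory GRing.Theory Num.Theory.
Local Open Scope ring_scope.

Definition log2 (y : R) : R := (ln y / ln 2)%R.

(* A JT pattern: kappa i j = true iff cell i serves UE j. *)
Definition pattern (n m : nat) := 'I_n -> 'I_m -> bool.

Definition load_f n m (kappa : pattern n m) (d : 'I_m -> R)
  (gamma : 'I_m -> R) : 'I_n -> R :=
  fun i => \sum_(j < m) (if kappa i j then d j / log2 (1 + gamma j) else 0).

Definition sinr_h n m (kappa : pattern n m) (p : 'I_n -> R)
  (g : 'I_n -> 'I_m -> R) (sigma2 : R) (x : 'I_n -> R) : 'I_m -> R :=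
  fun j => (\sum_(i < n) (if kappa i j then p i * g i j else 0)) /
           (\sum_(k < n) (if kappa k j then 0 else p k * g k j * x k) + sigma2).

Fixpoint mixed_iter n m (kappa kappa' : pattern n m) (d : 'I_m -> R)
  (p : 'I_n -> R) (g : 'I_n -> 'I_m -> R) (sigma2 : R)
  (x0 : 'I_n -> R) (t : nat) : 'I_n -> R :=
  match t with
  | 0%N => x0
  | t'.+1 => load_f kappa d
               (sinr_h kappa' p g sigma2 (mixed_iter kappa kappa' d p g sigma2 x0 t'))
  end.

From mathcomp Require Import all_boot all_order all_algebra.
From mathcomp Require Import Rstruct.
From Stdlib Require Import Reals.
From mathcomp Require Import ring lra.
From mathcomp Require Import interval_inference reals convex exp Rstruct_topology.
Import Order.TTheory GRing.Theory Num.Theory.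
Local Open Scope ring_scope.

(* The load map [G x = f (h x)] is monotone and, by concavity of [ln], strictly
   subhomogeneous: [G (a x) < a G x] for [a > 1].  Hence its fixed point lies
   below every [y >= 0] with [G y <= y]: otherwise compare it with [a y] for the
   largest ratio [a = x_b / y_b > 1].  Adding the link [(i0, j0)] only enlarges
   the serving sets, so the SINRs grow and the mixed iterates decrease from [xt].
   At step [k] the iterate is such a [y] for [kappa']: in row [i0] by hypothesis,
   and in every other row, where [f^kappa] and [f^kappa'] agree, because the
   iterates decrease.  Hence [x <= x^(k) <= xt]. *)

Lemma ln2_gt0 : 0 < ln (2 : R).
Proof. by apply/ln_gt0/RltP; apply: Rlt_plus_1. Qed.

Lemma log2E (y : R) : log2 y = ln y / ln (2 : R).
Proof. by rewrite /log2 RdivE !RlnE. Qed.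

Lemma log2_gt0 (y : R) : 1 < y -> 0 < log2 y.
Proof. by move=> y1; rewrite log2E divr_gt0 ?ln2_gt0 ?ln_gt0. Qed.

Lemma ler_log2 (y y' : R) : 0 < y -> y <= y' -> log2 y <= log2 y'.
Proof.
move=> y0 yy'; rewrite !log2E ler_pM2r ?invr_gt0 ?ln2_gt0 //.
by rewrite ler_ln ?posrE // (lt_le_trans y0).
Qed.

Lemma ltr_log2 (y y' : R) : 0 < y -> y < y' -> log2 y < log2 y'.
Proof.
move=> y0 yy'; rewrite !log2E ltr_pM2r ?invr_gt0 ?ln2_gt0 //.
by rewrite ltr_ln ?posrE // (lt_trans y0).
Qed.

Local Open Scope convex_scope.

(* [1 + u / a] is the convex combination of [1 + u] and [1] with weight [1 / a]. *)
Lemma ln1D_le_scale {K : realType} (u a : K) : 0 <= u -> 1 <= a ->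
  ln (1 + u) <= a * ln (1 + u / a).
Proof.
move=> u0 a1; have a0 : 0 < a by apply: lt_le_trans a1.
have ia0 : 0 <= a^-1 by rewrite invr_ge0 ltW.
have ia1 : a^-1 <= 1 by rewrite invf_le1.
have := @concave_ln _ (Itv01 ia0 ia1) (1 + u) 1 ltac:(by rewrite ltr_pwDl) ltr01.
rewrite !convRE /= ln1 mulr0 addr0.
have -> : a^-1 * (1 + u) + (1 - a^-1) * 1 = 1 + u / a by rewrite [u / a]mulrC; ring.
by rewrite -(ler_pM2l a0) mulrA mulfV ?gt_eqF // mul1r.
Qed.

Local Close Scope convex_scope.

Lemma log2_1D_lt_scale (u v a : R) : 0 < u -> 1 < a -> u / a < v ->
  log2 (1 + u) < a * log2 (1 + v).
Proof.
move=> u0 a1 uav; have a0 : 0 < a by apply: lt_trans a1.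
apply: (@le_lt_trans _ _ (a * log2 (1 + u / a))).
  rewrite !log2E mulrA ler_pM2r ?invr_gt0 ?ln2_gt0 //.
  by apply: ln1D_le_scale; rewrite ltW.
rewrite ltr_pM2l // ltr_log2 ?ltrD2l //.
by rewrite addr_gt0 ?divr_gt0.
Qed.

Lemma div_log2_1D_lt_scale (c u v a : R) : 0 < c -> 0 < u -> 1 < a -> u / a < v ->
  c / log2 (1 + v) < a * (c / log2 (1 + u)).
Proof.
move=> c0 u0 a1 uav; have a0 : 0 < a by apply: lt_trans a1.
have v0 : 0 < v by apply: le_lt_trans uav; rewrite divr_ge0 ?ltW.
have lu0 : 0 < log2 (1 + u) by rewrite log2_gt0 // ltrDl.
have lv0 : 0 < log2 (1 + v) by rewrite log2_gt0 // ltrDl.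
rewrite mulrCA ltr_pM2l // ltr_pdivlMr // ltr_pdivrMl // mulrC.
exact: log2_1D_lt_scale.
Qed.

Lemma sumr_gt0_at {K : numDomainType} {I : finType} (F : I -> K) j0 :
  (forall j, 0 <= F j) -> 0 < F j0 -> 0 < \sum_j F j.
Proof.
move=> F0 Fj0; rewrite (bigD1 j0) //=.
by rewrite ltr_wpDr // sumr_ge0.
Qed.

Lemma ltr_sum_at {K : numDomainType} {I : finType} (F G : I -> K) j0 :
  (forall j, F j <= G j) -> F j0 < G j0 -> \sum_j F j < \sum_j G j.
Proof.
move=> FG FGj0; rewrite (bigD1 j0) // [X in _ < X](bigD1 j0) //=.
by rewrite ltr_leD // ler_sum.
Qed.

Section LoadCoupling.

Context {n m : nat} {p : 'I_n -> R} {g : 'I_n -> 'I_m -> R} {d : 'I_m -> R} {s : R}.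
Hypotheses (hp : forall i, 0 < p i) (hg : forall i j, 0 < g i j)
  (hd : forall j, 0 < d j) (hs : 0 < s).

Implicit Types (kap : pattern n m) (gam : 'I_m -> R) (z : 'I_n -> R).

Lemma load_term_gt0 gam j : 0 < gam j -> 0 < d j / log2 (1 + gam j).
Proof. by move=> gam0; rewrite divr_gt0 ?log2_gt0 // ltrDl. Qed.

Lemma load_f_ge0 kap gam i : (forall j, 0 < gam j) -> 0 <= load_f kap d gam i.
Proof.
by move=> gam0; apply: sumr_ge0 => j _; case: (kap i j) => //; rewrite ltW ?load_term_gt0.
Qed.

Lemma load_f_anti kap gam gam' i : (forall j, 0 < gam j) ->
  (forall j, gam j <= gam' j) -> load_f kap d gam' i <= load_f kap d gam i.
Proof.
move=> gam0 le_gam; apply: ler_sum => j _; case: (kap i j) => //.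
have l0 : 0 < log2 (1 + gam j) by rewrite log2_gt0 // ltrDl.
have l1 : log2 (1 + gam j) <= log2 (1 + gam' j).
  by rewrite ler_log2 ?lerD2l ?addr_gt0.
by rewrite ler_wpM2l ?(ltW (hd j)) // lef_pV2 ?posrE // (lt_le_trans l0).
Qed.

Lemma load_f_unserved kap gam i : (forall j, ~~ kap i j) -> load_f kap d gam i = 0.
Proof. by move=> unserved; apply: big1 => j _; rewrite (negbTE (unserved j)). Qed.

Lemma load_f_row_eq kap kap' gam i :
  (forall j, kap' i j = kap i j) -> load_f kap' d gam i = load_f kap d gam i.
Proof. by move=> row_eq; apply: eq_bigr => j _; rewrite row_eq. Qed.

Lemma gain_gt0 i j : 0 < p i * g i j.
Proof. exact: mulr_gt0. Qed.

Lemma sinr_num_ge0 kap j : 0 <= \sum_(i < n) (if kap i j then p i * g i j else 0).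
Proof. by apply: sumr_ge0 => i _; case: (kap i j) => //; rewrite ltW ?gain_gt0. Qed.

Lemma sinr_num_gt0 kap j : (exists i, kap i j) ->
  0 < \sum_(i < n) (if kap i j then p i * g i j else 0).
Proof.
case=> i kij; apply: (sumr_gt0_at _ i); last by rewrite kij mulr_gt0.
by move=> k; case: (kap k j) => //; rewrite ltW ?gain_gt0.
Qed.

Lemma interference_ge0 kap z j : (forall i, 0 <= z i) ->
  0 <= \sum_(k < n) (if kap k j then 0 else p k * g k j * z k).
Proof.
by move=> z0; apply: sumr_ge0 => k _; case: (kap k j); rewrite // mulr_ge0 // ltW ?gain_gt0.
Qed.

Lemma sinr_den_gt0 kap z j : (forall i, 0 <= z i) ->
  0 < \sum_(k < n) (if kap k j then 0 else p k * g k j * z k) + s.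
Proof. by move=> z0; rewrite ltr_wpDl // interference_ge0. Qed.

Lemma sinr_h_gt0 kap z j : (exists i, kap i j) -> (forall i, 0 <= z i) ->
  0 < sinr_h kap p g s z j.
Proof. by move=> served z0; rewrite divr_gt0 ?sinr_num_gt0 ?sinr_den_gt0. Qed.

Lemma sinr_h_anti kap z z' j : (forall i, 0 <= z i) -> (forall i, z i <= z' i) ->
  sinr_h kap p g s z' j <= sinr_h kap p g s z j.
Proof.
move=> z0 le_z; have z'0 i : 0 <= z' i by apply: le_trans (le_z i).
rewrite /sinr_h ler_wpM2l ?sinr_num_ge0 // lef_pV2 ?posrE ?sinr_den_gt0 //.
rewrite lerD2r; apply: ler_sum => k _; case: (kap k j) => //.
by rewrite ler_wpM2l // ltW ?gain_gt0.
Qed.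

Lemma sinr_h_pattern_mono kap kap' z j : (forall i j, kap i j -> kap' i j) ->
  (forall i, 0 <= z i) -> sinr_h kap p g s z j <= sinr_h kap' p g s z j.
Proof.
move=> sub z0; rewrite /sinr_h; apply: ler_pM.
- exact: sinr_num_ge0.
- by rewrite invr_ge0 ltW ?sinr_den_gt0.
- apply: ler_sum => k _; case E: (kap k j); first by rewrite sub.
  by case: (kap' k j) => //; rewrite ltW ?gain_gt0.
- rewrite lef_pV2 ?posrE ?sinr_den_gt0 // lerD2r; apply: ler_sum => k _.
  case E: (kap k j); first by rewrite sub.
  by case: (kap' k j); rewrite // mulr_ge0 // ltW ?gain_gt0.
Qed.

(* Scaling the loads by [a > 1] scales the interference by [a] but not the noise. *)
Lemma sinr_h_scale kap z a j : (exists i, kap i j) -> (forall i, 0 <= z i) -> 1 < a ->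
  sinr_h kap p g s z j / a < sinr_h kap p g s (fun i => a * z i) j.
Proof.
move=> served z0 a1; have a0 : 0 < a by apply: lt_trans a1.
rewrite /sinr_h.
set I := \sum_(k < n) (if kap k j then 0 else p k * g k j * z k).
have -> : \sum_(k < n) (if kap k j then 0 else p k * g k j * (a * z k)) = a * I.
  rewrite mulr_sumr; apply: eq_bigr => k _.
  by case: (kap k j); rewrite ?mulr0 // mulrCA.
have I0 : 0 <= I by apply: interference_ge0.
have aI0 : 0 <= a * I by rewrite mulr_ge0 // ltW.
have den0 : 0 < I + s by rewrite ltr_wpDl.
rewrite -mulrA -invfM ltr_pM2l ?sinr_num_gt0 // ltf_pV2 ?posrE ?ltr_wpDl ?mulr_gt0 //.
by rewrite mulrDl [I * a]mulrC ltrD2l ltr_pMr.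
Qed.

Lemma load_map_gt0 kap z i j : (forall j, exists i, kap i j) -> (forall i, 0 <= z i) ->
  kap i j -> 0 < load_f kap d (sinr_h kap p g s z) i.
Proof.
move=> served z0 kij; apply: (sumr_gt0_at _ j); last first.
  by rewrite kij load_term_gt0 ?sinr_h_gt0.
by move=> l; case: (kap i l) => //; rewrite ltW ?load_term_gt0 ?sinr_h_gt0.
Qed.

Lemma load_map_scale kap z a i j : (forall j, exists i, kap i j) ->
  (forall i, 0 <= z i) -> 1 < a -> kap i j ->
  load_f kap d (sinr_h kap p g s (fun k => a * z k)) i
  < a * load_f kap d (sinr_h kap p g s z) i.
Proof.
move=> served z0 a1 kij.
have term_lt l : d l / log2 (1 + sinr_h kap p g s (fun k => a * z k) l)
                 < a * (d l / log2 (1 + sinr_h kap p g s z l)).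
  by rewrite div_log2_1D_lt_scale ?sinr_h_gt0 ?sinr_h_scale.
rewrite /load_f mulr_sumr; apply: (ltr_sum_at _ _ j); last by rewrite kij.
by move=> l; case: (kap i l); rewrite ?mulr0 // ltW.
Qed.

Lemma load_f_served kap gam i : load_f kap d gam i != 0 -> exists j, kap i j.
Proof.
move=> load_neq0; apply/existsP; apply: contraNT load_neq0.
by rewrite negb_exists => /forallP unserved; rewrite load_f_unserved.
Qed.

Section Supersolution.

Context {kap : pattern n m} {x y : 'I_n -> R}.
Hypotheses (served : forall j, exists i, kap i j)
  (x0 : forall i, 0 <= x i) (y0 : forall i, 0 <= y i)
  (fix_x : forall i, x i = load_f kap d (sinr_h kap p g s x) i)
  (super_y : forall i, load_f kap d (sinr_h kap p g s y) i <= y i).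

Lemma fixpoint_eq0_of_supersolution_eq0 i : y i = 0 -> x i = 0.
Proof.
move=> yi0; apply/eqP; apply: contraT; rewrite fix_x => /load_f_served [j kij].
have := @load_map_gt0 kap y i j served y0 kij; have := super_y i; rewrite yi0; lra.
Qed.

(* Compare [x] with [a * y] for the largest ratio [a = x b / y b]: if [a > 1],
   monotonicity and strict subhomogeneity give [x b < a * y b = x b]. *)
Lemma fixpoint_le_supersolution i : x i <= y i.
Proof.
rewrite leNgt; apply/negP => yx.
have [b _ max_b] := @arg_maxP _ _ 'I_n i predT (fun k => x k / y k) erefl.
set a := x b / y b in max_b.
have yi0 : 0 < y i.
  rewrite lt_neqAle y0 andbT eq_sym; apply: contraTneq yx => yi0.
  by rewrite yi0 fixpoint_eq0_of_supersolution_eq0 ?ltxx.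
have a1 : 1 < a by apply: lt_le_trans (max_b i erefl); rewrite ltr_pdivlMr ?mul1r.
have a0 : 0 < a by apply: lt_trans a1.
have yb0 : 0 < y b.
  rewrite lt_neqAle y0 andbT eq_sym; apply: contraTneq a1 => yb0.
  by rewrite /a yb0 invr0 mulr0 ltr10.
have xb : x b = a * y b by rewrite /a divfK ?gt_eqF.
have x_le_ay k : x k <= a * y k.
  have [yk0|yk_neq0] := eqVneq (y k) 0.
    by rewrite yk0 mulr0 fixpoint_eq0_of_supersolution_eq0.
  have yk0 : 0 < y k by rewrite lt_neqAle eq_sym yk_neq0 y0.
  by rewrite -ler_pdivrMr //; apply: max_b.
have [j kbj] : exists j, kap b j.
  by apply: (@load_f_served _ (sinr_h kap p g s x)); rewrite -fix_x xb mulf_neq0 ?gt_eqF.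
have ay0 k : 0 <= a * y k by rewrite mulr_ge0 // ltW.
have : x b <= load_f kap d (sinr_h kap p g s (fun k => a * y k)) b.
  rewrite {1}fix_x; apply: load_f_anti => [l|l]; first exact: sinr_h_gt0.
  exact: sinr_h_anti.
have := @load_map_scale kap y a b j served y0 a1 kbj.
have : a * load_f kap d (sinr_h kap p g s y) b <= a * y b by rewrite ler_pM2l.
rewrite -xb; lra.
Qed.

End Supersolution.

Section MixedIteration.

Context {kap kap' : pattern n m} {xt : 'I_n -> R}.
Hypotheses (served : forall j, exists i, kap i j) (served' : forall j, exists i, kap' i j)
  (sub : forall i j, kap i j -> kap' i j)
  (xt0 : forall i, 0 <= xt i)
  (fix_xt : forall i, xt i = load_f kap d (sinr_h kap p g s xt) i).

Local Notation Y := (mixed_iter kap kap' d p g s xt).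

Lemma mixed_iter_ge0 t i : 0 <= Y t i.
Proof.
elim: t i => [|t IHt] i //=.
by apply: load_f_ge0 => j; apply: sinr_h_gt0 (served' j) IHt.
Qed.

Lemma mixed_iter_succ_le t i : Y t.+1 i <= Y t i.
Proof.
elim: t i => [|t IHt] i /=.
  rewrite [X in _ <= X]fix_xt; apply: load_f_anti => j.
    exact: sinr_h_gt0 (served j) xt0.
  exact: sinr_h_pattern_mono.
apply: load_f_anti => j; first exact: sinr_h_gt0 (served' j) (mixed_iter_ge0 t).
by apply: sinr_h_anti => k; [exact: (mixed_iter_ge0 t.+1) | exact: IHt].
Qed.

Lemma mixed_iter_le_init t i : Y t i <= xt i.
Proof. by elim: t i => [|t IHt] i //; apply: le_trans (mixed_iter_succ_le t i) (IHt i). Qed.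

End MixedIteration.

End LoadCoupling.

Theorem theorem3 (n m : nat) (p : 'I_n -> R) (g : 'I_n -> 'I_m -> R)
  (d : 'I_m -> R) (sigma2 : R)
  (hp : forall i, 0 < p i) (hg : forall i j, 0 < g i j)
  (hd : forall j, 0 < d j) (hs : 0 < sigma2)
  (kappa kappa' : pattern n m)
  (hk : forall j, exists i, kappa i j) (hk' : forall j, exists i, kappa' i j)
  (i0 : 'I_n) (j0 : 'I_m)
  (h0 : kappa i0 j0 = false) (h1 : kappa' i0 j0 = true)
  (hsame : forall h l, (h, l) <> (i0, j0) -> kappa' h l = kappa h l)
  (xt x : 'I_n -> R)
  (hxt0 : forall i, 0 <= xt i) (hx0 : forall i, 0 <= x i)
  (hxt : forall i, xt i = load_f kappa d (sinr_h kappa p g sigma2 xt) i)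
  (hx : forall i, x i = load_f kappa' d (sinr_h kappa' p g sigma2 x) i)
  (hexk : exists k : nat, (1 <= k)%nat /\
     load_f kappa' d (sinr_h kappa' p g sigma2
        (mixed_iter kappa kappa' d p g sigma2 xt k)) i0
     <= mixed_iter kappa kappa' d p g sigma2 xt k i0) :
  forall i, x i <= xt i.
Proof.
have sub h l : kappa h l -> kappa' h l.
  have [[-> ->]|hl_neq] := eqVneq (h, l) (i0, j0); first by rewrite h0.
  by rewrite hsame //; apply/eqP.
(* The argument works for every [k], including [k = 0]. *)
have [k [_ super_i0]] := hexk.
set Y := mixed_iter kappa kappa' d p g sigma2 xt.
have super_Yk i : load_f kappa' d (sinr_h kappa' p g sigma2 (Y k)) i <= Y k i.
  have [->|i_neq] := eqVneq i i0; first exact: super_i0.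
  rewrite (@load_f_row_eq _ _ d kappa).
    exact: (mixed_iter_succ_le hp hg hd hs hk hk' sub hxt0 hxt).
  by move=> j; apply: hsame => -[i_eq _]; rewrite i_eq eqxx in i_neq.
move=> i; apply: le_trans (mixed_iter_le_init hp hg hd hs hk hk' sub hxt0 hxt k i).
have Yk0 : forall i, 0 <= Y k i := mixed_iter_ge0 hp hg hd hs hk' hxt0 k.
exact: (fixpoint_le_supersolution hp hg hd hs hk' hx0 Yk0 hx super_Yk i).
Qed.
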